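(* In any execution of Algorithm FS, let $v\in V_A^0$ and let $t$ be a round such that $c_t(v)\ge c_t(w)$ for every node $w\ne v$ active in round $t$. Then for every round $t'>t$ and every node $w$ active in round $t'$, $c_{t'}(v)\ge c_{t'}(w)$.
   Context: Model (beeping model with arbitrary activations). $G=(V,E)$ finite connected undirected graph; synchronous rounds; in each round each active node either beeps or listens; a listening node learns only whether at least one neighbor beeped. $T\ge 4$; checkpoints $\mathit{CP}=\{c\in\mathbb{N}_0: c\equiv 0\pmod 4,\ T-c>3\}$. Algorithm FS. Each node $v$ stores $\delta(v)\in\{0,\dots,T-1\}$, $\mathit{State}(v)\in\{\mathit{Inactive},\mathit{Beep},\mathit{Listen}\}$, $\mathit{Induced}(v)\in\{\mathit{true},\mathit{false}\}$. Initially all nodes are Inactive. A node $v$ is activated in round $t$ if the adversary activates it in round $t$, or $v$ is inactive and some neighbor beeps in round $t-1$; then at the beginning of round $t$, $\delta(v)=1$, $\mathit{State}(v)=\mathit{Beep}$, $\mathit{Induced}(v)=\mathit{true}$. In each round each active node $v$, according to its state at the beginning of the round: (1) if $\mathit{State}(v)=\mathit{Beep}$: beeps; $\delta(v)\gets\delta(v)+1\bmod T$; $\mathit{State}(v)\gets\mathit{Listen}$; (2) if $\mathit{State}(v)=\mathit{Listen}$ and some neighbor beeps: if $\delta(v)\equiv c-1\pmod T$ for some $c\in\mathit{CP}$, then $\delta(v)\gets\delta(v)+2\bmod T$, $\mathit{State}(v)\gets\mathit{Beep}$, $\mathit{Induced}(v)\gets\mathit{true}$; else $\delta(v)\gets\delta(v)+1\bmod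 T$; (3) if $\mathit{State}(v)=\mathit{Listen}$ and no neighbor beeps: $\delta(v)\gets\delta(v)+1\bmod T$; then if ($\mathit{Induced}(v)=\mathit{true}$ and new $\delta(v)\in\mathit{CP}$) or new $\delta(v)=0$: $\mathit{State}(v)\gets\mathit{Beep}$, $\mathit{Induced}(v)\gets\mathit{false}$. Rounds are numbered so that round $0$ is the first round at whose beginning some node is active; $V_A^0$ is the set of nodes activated by the adversary in round $0$. Virtual counter: if $v$ is activated in round $t_0$ then $c_{t_0}(v)=0$, and $c_{t+1}(v)=c_t(v)+a$, where $a\in\{1,2\}$ is the amount added to $\delta(v)$ (before reduction mod $T$) in round $t$. *)

From mathcomp Require Import all_boot.
Set Implicit Arguments. Unset Strict Implicit. Unset Printing Implicit Defensive.

Definition simple_graph (V : finType) (E : rel V) : Prop :=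
  symmetric E /\ irreflexive E.
Definition connected_graph (V : finType) (E : rel V) : Prop :=
  forall x y : V, connect E x y.

Definition isCP (T c : nat) : bool := (c %% 4 == 0) && (3 < T - c).

(* Local state of an active node; [cnt] is the virtual counter c_t(v). *)
Record NState := mkNS { dl : nat; beepst : bool; induced : bool; cnt : nat }.

(* Configuration: None = Inactive. *)
Definition config (V : finType) := V -> option NState.

Section FS.
Variables (V : finType) (E : rel V) (T : nat).

Definition beeps (cf : config V) (u : V) : bool :=
  if cf u is Some s then beepst s else false.

Definition hears (cf : config V) (v : V) : bool := [exists u, E v u && beeps cf u].

Definition node_step (s : NState) (heard : bool) : NState :=
  if beepst s then mkNS ((dl s + 1) %% T) false (induced s) (cnt s + 1)
  else if heard then
    if [exists c : 'I_T, isCP T c && ((dl s + 1) == c %[mod T])]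
    then mkNS ((dl s + 2) %% T) true true (cnt s + 2)
    else mkNS ((dl s + 1) %% T) false (induced s) (cnt s + 1)
  else
    let d := (dl s + 1) %% T in
    if (induced s && isCP T d) || (d == 0)
    then mkNS d true false (cnt s + 1)
    else mkNS d false (induced s) (cnt s + 1).

Definition round_step (cf : config V) : config V :=
  fun v => if cf v is Some s then Some (node_step s (hears cf v)) else None.

Definition fresh : NState := mkNS 1 true true 0.

(* activation at the beginning of a round: an inactive node is activated if the
   adversary activates it, or a neighbour beeped in the previous round
   ([prev] = configuration at the beginning of the previous round, if any). *)
Definition activate (adv : V -> bool) (prev : option (config V)) (cf : config V)
  : config V :=
  fun v => if cf v is Some s then Some s
           else if adv v || (if prev is Some p then hears p v else false)
                then Some fresh else None.

(* cfg adv t = configuration at the beginning of round t (after activations). *)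
Fixpoint cfg (adv : nat -> V -> bool) (t : nat) : config V :=
  match t with
  | 0 => activate (adv 0) None (fun _ => None)
  | t'.+1 => let p := cfg adv t' in activate (adv t) (Some p) (round_step p)
  end.

Definition active (adv : nat -> V -> bool) (t : nat) (v : V) : bool :=
  if cfg adv t v is Some _ then true else false.

(* virtual counter c_t(v) (0 if v inactive in round t) *)
Definition counter (adv : nat -> V -> bool) (t : nat) (v : V) : nat :=
  if cfg adv t v is Some s then cnt s else 0.

End FS.

From mathcomp Require Import all_boot zify.
Set Implicit Arguments. Unset Strict Implicit. Unset Printing Implicit Defensive.

(* The virtual counter of every active node grows by 1 or
   2 per round, so a node activated by the adversary in round 0 has counter at
   least t in round t.  Conversely, NO node ever has counter larger than t in
   round t: the only way to gain 2 in a round is to jump, i.e. to hear a beep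
   while listening one round before a checkpoint, and a node whose counter
   already equals the round number cannot do that. *)

Section SingleNode.
Variable T : nat.
Hypothesis T_ge4 : 4 <= T.

Definition jump_ready (s : NState) : bool :=
  [exists c : 'I_T, isCP T c && ((dl s + 1) == c %[mod T])].

Definition jumps (s : NState) (heard : bool) : bool :=
  ~~ beepst s && heard && jump_ready s.

Lemma cnt_step s h :
  cnt (node_step T s h) = cnt s + (if jumps s h then 2 else 1).
Proof.
rewrite /node_step /jumps -/(jump_ready s); case: (beepst s) => //=.
by case: h => /=; [case: (jump_ready s) | case: ifP].
Qed.

Lemma jumps_beep s h : jumps s h -> beepst (node_step T s h).
Proof. by rewrite /node_step -/(jump_ready s) => /andP[/andP[/negbTE -> ->] ->]. Qed.

(* The deltas at which a node can beep: a checkpoint or one past it, or 0/1. *)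
Definition beep_phase (d : nat) : bool := (d %% 4 <= 1) && (d + 3 <= T).

Lemma checkpoint_beep_phase c :
  isCP T c -> beep_phase c /\ beep_phase ((c + 1) %% T).
Proof.
move=> /andP[/eqP c4 cT]; rewrite /beep_phase (@modn_small (c + 1)); last by lia.
have: (c + 1) %% 4 = (c %% 4 + 1) %% 4 by rewrite modnDml.
by split; apply/andP; split; lia.
Qed.

Lemma beep_phase_no_checkpoint d k :
  beep_phase d -> 0 < k < 3 -> ~~ isCP T ((d + k) %% T).
Proof.
move=> /andP[d4 dT] k12; rewrite (@modn_small (d + k)); last by lia.
have: (d + k) %% 4 = (d %% 4 + k) %% 4 by rewrite modnDml.
by rewrite /isCP; case: eqP => //=; lia.
Qed.

Lemma checkpoint_pred d :
  d < T -> isCP T ((d + 1) %% T) -> ~~ isCP T d && (d != 0).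
Proof.
move=> dT; case: (ltnP (d + 1) T) => hd.
  rewrite modn_small // => /andP[/eqP c4 _].
  have: (d + 1) %% 4 = (d %% 4 + 1) %% 4 by rewrite modnDml.
  by rewrite /isCP; case: eqP => /=; lia.
move=> _; rewrite /isCP negb_and; apply/andP; split; [apply/orP; right|apply/eqP]; lia.
Qed.

Definition consistent (s : NState) : Prop :=
  dl s = (cnt s + 1) %% T /\ (beepst s -> beep_phase (dl s)).

Lemma consistent_fresh : consistent fresh.
Proof. by split => [|_] /=; [rewrite modn_small //; lia | apply/andP; split; lia]. Qed.

Lemma dl_succ s : consistent s -> (dl s + 1) %% T = (cnt s + 2) %% T.
Proof. by move=> [-> _]; rewrite modnDml -addnA. Qed.

Lemma jump_readyE s : consistent s -> jump_ready s = isCP T ((cnt s + 2) %% T).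
Proof.
move=> hs; rewrite /jump_ready (dl_succ hs).
apply/existsP/idP => [[c /andP[hc /eqP ->]] | hc].
  by rewrite modn_small.
have cT : (cnt s + 2) %% T < T by rewrite ltn_mod; lia.
by exists (Ordinal cT); rewrite hc modn_mod eqxx.
Qed.

Lemma consistent_step s h : consistent s -> consistent (node_step T s h).
Proof.
move=> cs; have [hd hb] := cs.
have e1 : (dl s + 1) %% T = (cnt s + 1 + 1) %% T by rewrite hd modnDml.
rewrite /node_step -/(jump_ready s).
case: (beepst s) hb => _ /=; first by split; rewrite //= e1.
case: h => /=.
  case hj: (jump_ready s) => /=; last by split; rewrite //= e1.
  rewrite jump_readyE // in hj.
  split => [|_]; first by rewrite /= hd modnDml -!addnA.
  have -> : (dl s + 2) %% T = ((cnt s + 2) %% T + 1) %% T.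
    by rewrite hd !modnDml -!addnA.
  exact: (checkpoint_beep_phase hj).2.
case: ifP => hc /=; split => //; try by rewrite e1.
move=> _; case/orP: hc => [/andP[_ hc] | /eqP ->].
  exact: (checkpoint_beep_phase hc).1.
by rewrite /beep_phase mod0n /=; lia.
Qed.

Lemma no_jump_near_beeper s su :
  consistent s -> consistent su -> beepst su ->
  cnt su <= cnt s <= cnt su + 1 -> ~~ jump_ready s.
Proof.
move=> hs [hdu hbu] bu /andP[h1 h2]; rewrite jump_readyE //.
have hph := hbu bu; rewrite hdu in hph.
have [k k12 ->] : exists2 k, 0 < k < 3 & cnt s + 2 = cnt su + 1 + k.
  by exists (cnt s - cnt su + 1); lia.
by rewrite -modnDml; apply: beep_phase_no_checkpoint.
Qed.

Lemma stays_listening s h :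
  consistent s -> ~~ jumps s h -> isCP T ((cnt s + 3) %% T) ->
  ~~ beepst (node_step T s h) && jump_ready (node_step T s h).
Proof.
move=> hs hj hc; apply/andP; split; last first.
  rewrite jump_readyE; last exact: consistent_step.
  by rewrite cnt_step (negbTE hj) -addnA.
move: hj; rewrite /node_step /jumps -/(jump_ready s).
case: (beepst s) => //=; case: h => /= [/negbTE -> // | _].
have dT : (dl s + 1) %% T < T by rewrite ltn_mod; lia.
have /(checkpoint_pred dT) /andP[nCP n0] : isCP T (((dl s + 1) %% T + 1) %% T).
  by rewrite dl_succ // modnDml -addnA.
by case: ifP => //; rewrite (negbTE nCP) (negbTE n0) andbF.
Qed.

Definition pair_inv (sx sy : NState) : Prop :=
  cnt sx <= cnt sy + 2 /\
  (cnt sx = cnt sy + 2 -> [/\ beepst sx, ~~ beepst sy & jump_ready sy]).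

Lemma pair_inv_step sx sy (hx hy : bool) :
  consistent sx -> consistent sy -> pair_inv sx sy -> (beepst sx -> hy) ->
  pair_inv (node_step T sx hx) (node_step T sy hy).
Proof.
move=> csx csy [le2 eq2] hear; rewrite /pair_inv !cnt_step.
have [/eq2 [bx nby ry] | ne2] := eqVneq (cnt sx) (cnt sy + 2).
  have jy : jumps sy hy by rewrite /jumps nby hear.
  have njx : jumps sx hx = false by rewrite /jumps bx.
  by rewrite njx jy; split; lia.
case jx: (jumps sx hx); case jy: (jumps sy hy); split; try lia;
  move=> heq; try (exfalso; lia).
have bx := jumps_beep jx.
move: jx => /andP[_]; rewrite jump_readyE // => cpx.
have cpy : isCP T ((cnt sy + 3) %% T) by have -> : cnt sy + 3 = cnt sx + 2 by lia.
by have /andP[nby ry] := stays_listening csy (negbT jy) cpy.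
Qed.

End SingleNode.

Section Execution.
Variables (V : finType) (E : rel V) (T : nat) (adv : nat -> V -> bool).
Hypotheses (E_sym : symmetric E) (T_ge4 : 4 <= T).

Local Notation cfg := (cfg E T adv).

Lemma cfg_0 x : cfg 0 x = if adv 0 x then Some fresh else None.
Proof. by rewrite /= /activate orbF. Qed.

Lemma cfg_S t x :
  cfg t.+1 x =
  match cfg t x with
  | Some s => Some (node_step T s (hears E (cfg t) x))
  | None => if adv t.+1 x || hears E (cfg t) x then Some fresh else None
  end.
Proof. by rewrite /= /activate /round_step; case: (cfg t x). Qed.

Lemma hears_beeper (cf : config V) x y sx :
  E y x -> cf x = Some sx -> beepst sx -> hears E cf y.
Proof. by move=> hyx hx bx; apply/existsP; exists x; rewrite hyx /beeps hx. Qed.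

Lemma heard_beeper (cf : config V) y :
  hears E cf y -> exists x sx, [/\ E y x, cf x = Some sx & beepst sx].
Proof.
case/existsP=> x /andP[hyx]; rewrite /beeps.
by case hx: (cf x) => [sx|] // bx; exists x, sx.
Qed.

Definition node_inv (t : nat) (cf : config V) : Prop :=
  forall x s, cf x = Some s -> consistent T s /\ cnt s <= t.

Definition edge_inv (cf : config V) : Prop :=
  forall x y, E x y ->
  match cf x, cf y with
  | Some sx, Some sy => pair_inv T sx sy
  | Some sx, None => sx = fresh
  | None, _ => True
  end.

Lemma no_jump_at_round t x sx :
  node_inv t (cfg t) -> edge_inv (cfg t) -> cfg t x = Some sx -> t <= cnt sx ->
  ~~ jumps T sx (hears E (cfg t) x).
Proof.
move=> Hn He hx ht; apply/negP => /andP[/andP[nbx /heard_beeper[u [su [hxu hu bu]]]] rx].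
have [csx _] := Hn _ _ hx; have [csu cu] := Hn _ _ hu.
have := He _ _ hxu; rewrite hx hu => -[le2 eq2].
have [/eq2 [bx _ _] | ne2] := eqVneq (cnt sx) (cnt su + 2); first by rewrite bx in nbx.
by rewrite (negbTE (no_jump_near_beeper T_ge4 csx csu bu _)) in rx; lia.
Qed.

Lemma node_inv_step t :
  node_inv t (cfg t) -> edge_inv (cfg t) -> node_inv t.+1 (cfg t.+1).
Proof.
move=> Hn He x s; rewrite cfg_S.
case hx: (cfg t x) => [sx|]; last by case: ifP => // _ [<-]; split; [exact: consistent_fresh|].
move=> [<-]; have [csx cx] := Hn _ _ hx.
split; first exact: consistent_step.
rewrite cnt_step; case: ifP => jx; last by lia.
have [lt | ge] := ltnP (cnt sx) t; first by lia.
by rewrite (negbTE (no_jump_at_round Hn He hx ge)) in jx.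
Qed.

Lemma edge_inv_step t :
  node_inv t (cfg t) -> edge_inv (cfg t) -> edge_inv (cfg t.+1).
Proof.
move=> Hn He x y hxy; rewrite !cfg_S.
have hyx : E y x by rewrite E_sym.
have := He _ _ hxy; have := He _ _ hyx.
case hx: (cfg t x) => [sx|]; case hy: (cfg t y) => [sy|] => inv_yx inv_xy.
- apply: pair_inv_step => //.
  + exact: (Hn _ _ hx).1.
  + exact: (Hn _ _ hy).1.
  + exact: hears_beeper hyx hx.
- by subst sx; rewrite (hears_beeper hyx hx) ?orbT.
- by subst sy; case: ifP.
- by case: ifP => //; case: ifP.
Qed.

Lemma invariants t : node_inv t (cfg t) /\ edge_inv (cfg t).
Proof.
elim: t => [|t [Hn He]]; last by split; [apply: node_inv_step | apply: edge_inv_step].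
split => [x s | x y _]; rewrite !cfg_0.
  by case: (adv 0 x) => // -[<-]; split; [exact: consistent_fresh |].
by case: (adv 0 x); case: (adv 0 y).
Qed.

End Execution.

Lemma counter_at_least_round (V : finType) (E : rel V) T (adv : nat -> V -> bool) v :
  adv 0 v -> forall t, exists2 s, cfg E T adv t v = Some s & t <= cnt s.
Proof.
move=> hv; elim=> [|t [s hs ht]]; first by exists fresh; rewrite // cfg_0 hv.
by rewrite cfg_S hs; eexists; [reflexivity | rewrite cnt_step; case: ifP; lia].
Qed.

Theorem mainTheorem9 (V : finType) (E : rel V) (T : nat)
  (adv : nat -> V -> bool) (v : V) (t : nat) :
  simple_graph E -> connected_graph E -> 4 <= T ->
  adv 0 v ->
  (forall w, w != v -> active E T adv t w -> counter E T adv t w <= counter E T adv t v) ->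
  forall t' w, t < t' -> active E T adv t' w ->
    counter E T adv t' w <= counter E T adv t' v.
Proof.
move=> [E_sym _] _ T_ge4 hv _ t' w _.
have [sv hsv v_ge] := counter_at_least_round E T hv t'.
have [Hn _] := invariants adv E_sym T_ge4 t'.
rewrite /active /counter hsv; case hw: (cfg E T adv t' w) => [sw|] // _.
by have [_ w_le] := Hn _ _ hw; apply: leq_trans v_ge.
Qed.
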